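(* Let $k\geq 1$ and $n\geq k+2$ be integers, and let $T_n$ be any $k$-tree with $n$ vertices. Then $$\det({\sf D}^{k}(T_n))=(-1)^{k(n-k)}\,k\,(k+1)^{n-k-1}(n-k).$$
   Context: A $k$-tree is either the complete graph on $k$ vertices, or a graph obtained from a smaller $k$-tree by adding a new vertex joined by $k$ edges to all vertices of a $k$-clique (complete subgraph on $k$ vertices). In a $k$-tree $T$, for $k$-cliques $\tau,\tau'$, a $k$-walk from $\tau$ to $\tau'$ is a sequence $\tau_1\sigma_1\tau_2\sigma_2\cdots\tau_l$ with $\tau_1=\tau$, $\tau_l=\tau'$, the $\tau_i$ being $k$-cliques and $\sigma_i$ a $(k+1)$-clique containing both $\tau_i$ and $\tau_{i+1}$; the $k$-distance $\operatorname{dist}^k(\tau,\tau')$ is the number of $(k+1)$-cliques in a shortest such walk. If $T$ has $c$ $k$-cliques $\tau_1,\dots,\tau_c$ (in any fixed order), the $k$-distance matrix ${\sf D}^k(T)$ is the $c\times c$ integer matrix with $(i,j)$-entry $0$ if $i=j$ and $\operatorname{dist}^k(\tau_i,\tau_j)$ otherwise (the determinant does not depend on the chosen order). *)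

From mathcomp Require Import all_boot all_order all_algebra.
From Stdlib Require Import ClassicalEpsilon.
Set Implicit Arguments. Unset Strict Implicit. Unset Printing Implicit Defensive.
Import GRing.Theory Num.Theory.
Local Open Scope ring_scope.

Section KTrees.
Variables (T : finType) (e : rel T).

Definition is_clique (S : {set T}) : bool :=
  [forall x in S, forall y in S, (x != y) ==> e x y].

Definition kclique (k : nat) (S : {set T}) : bool :=
  (#|S| == k)%N && is_clique S.

(* k-trees, built inductively on vertex subsets V (graph = induced subgraph
   on V): either a k-clique on k vertices, or a smaller k-tree on V plus a new
   vertex v whose neighbourhood inside V is exactly a k-clique C of it. *)
Inductive ktree_on (k : nat) : {set T} -> Prop :=
| ktree_base V : kclique k V -> ktree_on k V
| ktree_step V v (C : {set T}) : ktree_on k V -> v \notin V -> C \subset V ->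
    kclique k C -> [set u in V | e v u] = C -> ktree_on k (v |: V).

Definition is_ktree (k : nat) : Prop := ktree_on k [set: T].

(* A k-walk tau_1 sigma_1 tau_2 ... sigma_{l-1} tau_l from tau to tau' is
   encoded by tau and the list w = [:: (sigma_1, tau_2); ...; (sigma_{l-1}, tau_l)];
   the number of (k+1)-cliques in it is size w. *)
Fixpoint kwalk_from (k : nat) (tau : {set T}) (w : seq ({set T} * {set T}))
    (tau' : {set T}) : bool :=
  match w with
  | [::] => tau == tau'
  | (sigma, t) :: w' =>
      [&& kclique k.+1 sigma, tau \subset sigma, kclique k t, t \subset sigma
        & kwalk_from k t w' tau']
  end.

Definition is_kwalk (k : nat) (tau : {set T}) (w : seq ({set T} * {set T}))
    (tau' : {set T}) : bool :=
  kclique k tau && kwalk_from k tau w tau'.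

Definition has_kwalk_len (k : nat) (tau tau' : {set T}) (d : nat) : bool :=
  [exists w : d.-tuple ({set T} * {set T}), is_kwalk k tau w tau'].

(* k-distance: the number of (k+1)-cliques in a shortest k-walk
   (junk value 0 if no walk exists, which never happens in a k-tree). *)
Definition kdist (k : nat) (tau tau' : {set T}) : nat :=
  match excluded_middle_informative (exists d, has_kwalk_len k tau tau' d) with
  | left h => ex_minn h
  | right _ => 0%N
  end.

Definition kcliques (k : nat) : {set {set T}} := [set S | kclique k S].

Definition kdist_matrix (k : nat) : 'M[int]_#|kcliques k| :=
  \matrix_(i, j) (if i == j then 0%R
                  else ((kdist k (enum_val i) (enum_val j))%:Z)).

End KTrees.

(* Induction along the construction of the k-tree, for the shifted matrix D + tJ (J the
   all-ones matrix): on m vertices its determinant is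
   (-1)^(k(m-k)) (k+1)^(m-k) (t + (m-k) k/(k+1)).  Adding a vertex v joined to the k-clique C
   creates the k new k-cliques v + C - u (u in C); each is at distance d(C, tau) + 1 from every
   old k-clique tau and at distance 1 from the other new ones, because a walk through v
   retracts onto C.  Subtracting the row and column of C from the new ones and taking the
   Schur complement of the resulting block -(I + J) multiplies the determinant by
   (-1)^k (k+1) and shifts t by k/(k+1).  The theorem is the case t = 0. *)

From mathcomp Require Import all_boot all_order all_algebra.
From mathcomp Require Import perm zify ring.
Import GRing.Theory Num.Theory.
Set Implicit Arguments. Unset Strict Implicit. Unset Printing Implicit Defensive.
Local Open Scope ring_scope.

Section BlockDeterminants.
Variable R : comPzRingType.

Lemma sumr_delta_mul N (c : 'I_N) (x : 'I_N -> R) :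
  \sum_(l < N) (l == c)%:R * x l = x c.
Proof.
rewrite (bigD1 c) //= eqxx mul1r big1 ?addr0 // => l /negbTE ->.
by rewrite mul0r.
Qed.

Lemma mul_const_mx m n p (a b : R) :
  (const_mx a : 'M[R]_(m, n)) *m (const_mx b : 'M[R]_(n, p)) = const_mx (a * b *+ n).
Proof.
apply/matrixP => i j; rewrite !mxE.
by under eq_bigr do rewrite !mxE; rewrite sumr_const card_ord.
Qed.

Lemma det_conj_perm n (s : 'S_n) (g : 'I_n -> 'I_n -> R) :
  \det (\matrix_(i, j) g (s i) (s j)) = \det (\matrix_(i, j) g i j).
Proof.
have -> : \matrix_(i, j) g (s i) (s j) = row_perm s (col_perm s (\matrix_(i, j) g i j)).
  by apply/matrixP => i j; rewrite !mxE.
rewrite row_permE col_permE !det_mulmx !det_perm odd_permV.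
by rewrite mulrCA -signr_addb addbb mulr1.
Qed.

Lemma det_block_schurD m n (A : 'M[R]_m) B C (D Di : 'M[R]_n) :
  Di *m D = 1%:M -> \det (block_mx A B C D) = \det (A - B *m Di *m C) * \det D.
Proof.
move=> DiD; set U := block_mx 1%:M (- (B *m Di)) 0 1%:M.
have UM : U *m block_mx A B C D = block_mx (A - B *m Di *m C) 0 C D.
  rewrite mulmx_block !mul1mx !mul0mx !add0r !mulNmx.
  by rewrite -[B *m Di *m D]mulmxA DiD mulmx1 subrr.
have := congr1 determinant UM.
by rewrite det_mulmx det_ublock det_lblock !det1 !mul1r.
Qed.

Lemma det_block_schurA m n (A Ai : 'M[R]_m) B C (D : 'M[R]_n) :
  A *m Ai = 1%:M -> \det (block_mx A B C D) = \det A * \det (D - C *m Ai *m B).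
Proof.
move=> AAi; set L := block_mx 1%:M (- (Ai *m B)) 0 1%:M.
have ML : block_mx A B C D *m L = block_mx A 0 C (D - C *m Ai *m B).
  rewrite mulmx_block !mulmx1 !mulmx0 !addr0 !mulmxN mulmxA AAi mul1mx.
  by rewrite addNr addrC mulmxA.
have := congr1 determinant ML.
by rewrite det_mulmx det_ublock det_lblock !det1 !mulr1.
Qed.

Lemma det_1_add_const n : \det (1%:M + const_mx 1 : 'M[R]_n) = n.+1%:R.
Proof.
have := det_block_schurA (- const_mx 1) (const_mx 1) (1%:M : 'M[R]_n)
  (mulmx1 (1%:M : 'M[R]_1)).
have := det_block_schurD (1%:M : 'M[R]_1) (- const_mx 1) (const_mx 1)
  (mulmx1 (1%:M : 'M[R]_n)).
rewrite !mulmx1 !mulmxN mulNmx !opprK !mul_const_mx !mulr1 !det1 mul1r mulr1 => -> <-.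
by rewrite det_mx11 !mxE eqxx mulr1n addrC natr1.
Qed.

(* If A is D + tJ for a k-tree and c indexes the clique C, this is D + tJ after adding a
   vertex joined to C, the k new cliques coming last. *)
Definition kext_mx N k (A : 'M[R]_N) (c : 'I_N) : 'M[R]_(N + k) :=
  block_mx A (\matrix_(i < N, j < k) (A i c + 1)) (\matrix_(i < k, j < N) (A c j + 1))
    (\matrix_(i < k, j < k) (A c c + 1 - (i == j)%:R)).

Lemma det_kext_mx_reduce N k (A : 'M[R]_N) (c : 'I_N) :
  \det (kext_mx k A c) =
  \det (block_mx A (const_mx 1) (const_mx 1) (- (1%:M + const_mx 1) : 'M_k)).
Proof.
set Lm : 'M[R]_(k, N) := \matrix_(i, j) - (j == c)%:R.
have Lm_mul p (M : 'M[R]_(N, p)) : Lm *m M = \matrix_(i, j) - M c j.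
  apply/matrixP => i j; rewrite !mxE -(sumr_delta_mul c (M^~ j)) -sumrN.
  by apply: eq_bigr => l _; rewrite !mxE mulNr.
have mul_Lm_tr p (M : 'M[R]_(p, N)) : M *m Lm^T = \matrix_(i, j) - M i c.
  by rewrite -[M]trmxK -trmx_mul Lm_mul; apply/matrixP => i j; rewrite !mxE.
set L := block_mx (1%:M : 'M[R]_N) 0 Lm (1%:M : 'M_k).
have LML : L *m kext_mx k A c *m L^T =
    block_mx A (const_mx 1) (const_mx 1) (- (1%:M + const_mx 1)).
  rewrite /L /kext_mx tr_block_mx !trmx1 trmx0 !mulmx_block.
  rewrite !mul1mx !mul0mx !mulmx1 !mulmx0 !addr0 !mul_Lm_tr !Lm_mul.
  by congr block_mx; apply/matrixP => i j; rewrite !mxE; ring.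
have detL : \det L = 1 by rewrite det_lblock !det1 mulr1.
by rewrite -LML !det_mulmx det_tr detL mul1r mulr1.
Qed.

Definition seq_mx (X : Type) (x0 : X) (g : X -> X -> R) n (s : seq X) : 'M[R]_n :=
  \matrix_(i, j) g (nth x0 s i) (nth x0 s j).

Lemma det_seq_mx_perm (X : eqType) (x0 : X) g n (s s' : seq X) :
  size s = n -> size s' = n -> perm_eq s s' ->
  \det (seq_mx x0 g n s) = \det (seq_mx x0 g n s').
Proof.
move=> sz sz' ss'; have sz'n : size s' == n by rewrite sz'.
have /tuple_permP [p s_p] : perm_eq s (Tuple sz'n) by [].
have nth_s (i : 'I_n) : nth x0 s i = nth x0 s' (p i).
  by rewrite s_p -(tnth_nth x0) tnth_mktuple (tnth_nth x0).
rewrite -(det_conj_perm p (fun i j => g (nth x0 s' i) (nth x0 s' j))).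
by congr determinant; apply/matrixP => i j; rewrite !mxE !nth_s.
Qed.

Lemma seq_mx_cat_kext (X : eqType) (x0 y : X) (g : X -> X -> R) N k (s0 s1 : seq X)
    (c : 'I_N) :
  size s0 = N -> size s1 = k -> uniq s1 -> nth x0 s0 c = y ->
  {in s1 & s0, forall x z, g x z = g y z + 1} ->
  {in s0 & s1, forall z x, g z x = g z y + 1} ->
  {in s1 &, forall x x', g x x' = g y y + 1 - (x == x')%:R} ->
  seq_mx x0 g (N + k) (s0 ++ s1) = kext_mx k (seq_mx x0 g N s0) c.
Proof.
move=> sz0 sz1 uniq1 s0c g10 g01 g11.
have nth_l (i : 'I_N) : nth x0 (s0 ++ s1) (lshift k i) = nth x0 s0 i.
  by rewrite nth_cat sz0 /= ltn_ord.
have nth_r (j : 'I_k) : nth x0 (s0 ++ s1) (rshift N j) = nth x0 s1 j.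
  by rewrite nth_cat sz0 /= ltnNge leq_addr addKn.
have in0 (i : 'I_N) : nth x0 s0 i \in s0 by rewrite mem_nth ?sz0.
have in1 (j : 'I_k) : nth x0 s1 j \in s1 by rewrite mem_nth ?sz1.
rewrite -[LHS]submxK; congr block_mx; apply/matrixP => i j.
all: rewrite !mxE ?nth_l ?nth_r ?s0c //.
- by rewrite g01.
- by rewrite g10.
- by rewrite g11 // nth_uniq ?sz1.
Qed.

End BlockDeterminants.

Lemma det_kext_mx (F : fieldType) N k (A : 'M[F]_N) (c : 'I_N) :
  k.+1%:R != 0 :> F ->
  \det (kext_mx k A c) = (-1) ^+ k * k.+1%:R * \det (A + const_mx (k%:R / k.+1%:R)).
Proof.
move=> k1_neq0; set Di : 'M[F]_k := - (1%:M - const_mx (k.+1%:R)^-1).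
have DiD : Di *m - (1%:M + const_mx 1) = 1%:M.
  rewrite mulNmx mulmxN opprK mulmxDr !mulmxBl !mulmx1 mul1mx mul_const_mx.
  by apply/matrixP => i j; rewrite !mxE; field; rewrite addrC natr1.
rewrite det_kext_mx_reduce (det_block_schurD _ _ _ DiD).
rewrite -[- (1%:M + _)]scaleN1r detZ det_1_add_const /Di.
rewrite mulmxN mulNmx opprK mulmxBr mulmx1 mulmxBl !mul_const_mx mulrC.
congr (_ * _); congr determinant; apply/matrixP => i j; rewrite !mxE.
by field; rewrite addrC natr1.
Qed.

Local Close Scope ring_scope.

Section KTreeDistances.
Variables (T : finType) (e : rel T) (k : nat).
Hypotheses (e_sym : symmetric e) (k_gt0 : 0 < k).

Implicit Types (V C X Y tau : {set T}) (w : seq ({set T} * {set T})).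

Definition kcliques_in V := [set X | kclique e k X & X \subset V].

Definition walk_within V w := all (fun st : {set T} * {set T} => st.1 \subset V) w.

Definition kdist_within V tau tau' d :=
  (exists2 w, is_kwalk e k tau w tau' && walk_within V w & size w = d) /\
  (forall w, is_kwalk e k tau w tau' -> walk_within V w -> d <= size w).

Lemma kdist_within_uniq V tau tau' d1 d2 :
  kdist_within V tau tau' d1 -> kdist_within V tau tau' d2 -> d1 = d2.
Proof.
move=> [[w1 /andP [w1P w1V] <-] min1] [[w2 /andP [w2P w2V] <-] min2].
by apply/eqP; rewrite eqn_leq min1 // min2.
Qed.

Lemma kdist_within_refl V tau : kclique e k tau -> kdist_within V tau tau 0.
Proof. by move=> tauk; split=> //; exists [::]; rewrite //= andbT /is_kwalk tauk /=. Qed.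

Lemma kdist_withinT tau tau' d : kdist_within setT tau tau' d -> kdist e k tau tau' = d.
Proof.
move=> [[w /andP [wP _] sw] min]; rewrite /kdist.
have walk_d : has_kwalk_len e k tau tau' d.
  by apply/existsP; exists (tcast sw (in_tuple w)); rewrite val_tcast.
case: ClassicalEpsilon.excluded_middle_informative => [ex|[]]; last by exists d.
case: ex_minnP => m /existsP [w' w'P] m_min.
apply/eqP; rewrite eqn_leq m_min //=.
by rewrite -(size_tuple w') min //; apply/allP => st _; apply: subsetT.
Qed.

Lemma kwalk_from_cat tau w1 tau' w2 tau'' : kwalk_from e k tau w1 tau' ->
  kwalk_from e k tau' w2 tau'' -> kwalk_from e k tau (w1 ++ w2) tau''.
Proof.
elim: w1 tau => [|[s t] w IH] tau /=; first by move/eqP ->.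
by case/and5P=> -> -> -> -> /IH.
Qed.

Lemma walk_withinS V1 V2 w : V1 \subset V2 -> walk_within V1 w -> walk_within V2 w.
Proof. by move=> sV12 /allP wV; apply/allP => st /wV /subset_trans; apply. Qed.

Lemma is_cliqueS X Y : X \subset Y -> is_clique e Y -> is_clique e X.
Proof.
move=> sXY /forallP Ycl; apply/forallP => x; apply/implyP => xX.
apply/forallP => y; apply/implyP => yX.
by move: (Ycl x); rewrite (subsetP sXY x xX) => /forallP /(_ y); rewrite (subsetP sXY y yX).
Qed.

Lemma kwalk_through tau w tau' x : kwalk_from e k tau w tau' -> tau != tau' ->
  (x \in tau) || (x \in tau') -> has (fun st : {set T} * {set T} => x \in st.1) w.
Proof.
elim: w tau => [|[s t] w IH] tau /=; first by move=> /eqP ->; rewrite eqxx.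
case/and5P=> _ /subsetP taus _ /subsetP ts wP tau_t' /orP [/taus -> //|xt'].
case: (eqVneq t tau') => [t_t'|t_t']; first by rewrite ts ?t_t'.
by rewrite (IH t) ?xt' ?orbT.
Qed.

Lemma kcliques_inT : kcliques_in setT = kcliques e k.
Proof. by apply/setP => X; rewrite !inE subsetT andbT. Qed.

Lemma kcliques_inS V1 V2 : V1 \subset V2 -> kcliques_in V1 \subset kcliques_in V2.
Proof.
by move=> sV12; apply/subsetP => X; rewrite !inE => /andP [-> /subset_trans ->].
Qed.

Section AddVertex.
Variables (V : {set T}) (v : T) (C : {set T}).
Hypotheses (vV : v \notin V) (CV : C \subset V) (Ck : kclique e k C)
  (NvC : [set u in V | e v u] = C).

Let W := v |: V.

Definition retract X := if v \in X then C else X.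

Definition swapC u := v |: (C :\ u).

Lemma card_C : #|C| = k.
Proof. by case/andP: Ck => /eqP. Qed.

Lemma v_notin_C : v \notin C.
Proof. by apply: contra vV; apply: (subsetP CV). Qed.

Lemma edge_v_C x : x \in C -> e v x.
Proof. by rewrite -NvC inE => /andP []. Qed.

Lemma kclique_setU1C : kclique e k.+1 (v |: C).
Proof.
rewrite /kclique cardsU1 v_notin_C card_C add1n eqxx /=.
case/andP: Ck => _ /forallP Ccl.
apply/forallP => x; apply/implyP => /setU1P xvC.
apply/forallP => y; apply/implyP => /setU1P yvC; apply/implyP.
case: xvC yvC => [-> | xC] [-> | yC].
- by rewrite eqxx.
- by move=> _; apply: edge_v_C.
- by rewrite e_sym => _; apply: edge_v_C.
- by move: (Ccl x); rewrite xC => /forallP /(_ y) /implyP /(_ yC) /implyP.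
Qed.

Lemma clique_through_v X : X \subset W -> v \in X -> is_clique e X -> X :\ v \subset C.
Proof.
move=> /subsetP XW vX /forallP Xcl; apply/subsetP => x /setD1P [xv xX].
have /setU1P [/eqP|xV] := XW x xX; first by rewrite (negbTE xv).
by rewrite -NvC inE xV; move: (Xcl v); rewrite vX => /forallP /(_ x); rewrite xX eq_sym xv.
Qed.

Lemma kclique1_through_v X : kclique e k.+1 X -> X \subset W -> v \in X -> X = v |: C.
Proof.
move=> /andP [/eqP cardX Xcl] XW vX.
suff <- : X :\ v = C by rewrite setD1K.
apply/eqP; rewrite eqEcard clique_through_v //= card_C.
by move: cardX; rewrite (cardsD1 v) vX add1n => -[->].
Qed.

Lemma kclique_in_setU1C tau : kclique e k tau -> tau \subset v |: C -> v \notin tau -> tau = C.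
Proof.
move=> /andP [/eqP cardtau _] /subsetP tauvC vtau; apply/eqP.
rewrite eqEcard cardtau card_C leqnn andbT; apply/subsetP => x xtau.
by case/setU1P: (tauvC x xtau) => // xv; rewrite -xv xtau in vtau.
Qed.

Lemma kclique_retract tau : kclique e k tau -> kclique e k (retract tau).
Proof. by rewrite /retract; case: ifP. Qed.

Let avoids_v (st : {set T} * {set T}) := v \notin st.1.

(* The only (k+1)-clique through v is v |: C, so deleting the steps through it
   and replacing each k-clique through v by C leaves a walk of the old tree. *)
Lemma retract_walk tau w tau' : kclique e k tau -> kwalk_from e k tau w tau' ->
  walk_within W w ->
  kwalk_from e k (retract tau) (filter avoids_v w) (retract tau')
  && walk_within V (filter avoids_v w).
Proof.
elim: w tau => [|[s t] w IH] tau /=; first by move=> _ /eqP ->; rewrite eqxx.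
move=> tauk /and5P [sk taus tk ts wP] /andP [sW wW].
case/andP: (IH t tk wP wW) => IHwalk IHwithin.
rewrite /avoids_v /=; case vs: (v \in s) => /=.
  have vCs := kclique1_through_v sk sW vs.
  suff retractC X : kclique e k X -> X \subset s -> retract X = C.
    by rewrite (retractC tau) // -(retractC t tk ts) IHwalk.
  move=> Xk Xs; rewrite /retract; case: ifP => // /negbT vX.
  by apply: kclique_in_setU1C; rewrite -?vCs.
have notin_s X : X \subset s -> v \notin X.
  by move=> /subsetP Xs; apply: contraFN vs; apply: Xs.
rewrite /retract (negbTE (notin_s _ taus)) (negbTE (notin_s _ ts)) in IHwalk *.
rewrite sk taus tk ts IHwalk IHwithin !andbT /=.
by apply/subsetP => x xs; case/setU1P: (subsetP sW x xs) => // xv; rewrite -xv xs in vs.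
Qed.

Lemma retract_walk_lt tau w tau' : kclique e k tau -> kwalk_from e k tau w tau' ->
  walk_within W w -> tau != tau' -> (v \in tau) || (v \in tau') ->
  exists2 w', is_kwalk e k (retract tau) w' (retract tau') && walk_within V w'
            & size w' < size w.
Proof.
move=> tauk wP wW tau_tau' vtau; exists (filter avoids_v w).
  by rewrite /is_kwalk kclique_retract // retract_walk.
have := kwalk_through wP tau_tau' vtau; rewrite has_count size_filter.
have -> : count (fun st : {set T} * {set T} => v \in st.1) w = count (predC avoids_v) w.
  by apply: eq_count => st; rewrite /= negbK.
by rewrite -(count_predC avoids_v w); lia.
Qed.

Lemma notin_kcliques_in_V X : X \in kcliques_in V -> v \notin X.
Proof. by rewrite inE => /andP [_ /subsetP XV]; apply: contra vV; apply: XV. Qed.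

Lemma kdist_within_old tau tau' d : tau \in kcliques_in V -> tau' \in kcliques_in V ->
  kdist_within V tau tau' d -> kdist_within W tau tau' d.
Proof.
move=> tauV tau'V [[w /andP [wP wV] sw] min]; split.
  by exists w; rewrite // wP (walk_withinS (subsetU1 _ _) wV).
move=> w' /andP [tauk w'P] w'W; case/andP: (retract_walk tauk w'P w'W).
rewrite /retract (negbTE (notin_kcliques_in_V tauV)) (negbTE (notin_kcliques_in_V tau'V)).
move=> w''P w''V; apply: leq_trans (min _ _ w''V) _; first by rewrite /is_kwalk tauk.
by rewrite size_filter count_size.
Qed.

Lemma v_in_swapC u : v \in swapC u.
Proof. exact: setU11. Qed.

Lemma swapC_sub u : swapC u \subset v |: C.
Proof. by apply: setUS; apply: subsetDl. Qed.

Lemma kclique_swapC u : u \in C -> kclique e k (swapC u).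
Proof.
move=> uC; rewrite /kclique (is_cliqueS (swapC_sub u)); last by case/andP: kclique_setU1C.
rewrite cardsU1 !inE (negbTE v_notin_C) andbF andbT.
by move: (cardsD1 u C); rewrite uC card_C => ->.
Qed.

Lemma swapC_inj : {in C &, injective swapC}.
Proof.
move=> u u' uC u'C swap_uu'; apply/eqP; apply: contraT => uu'.
have : u \in swapC u' by rewrite !inE uC eq_sym uu' orbT.
by rewrite -swap_uu' !inE eqxx orbF => /eqP uv; move: v_notin_C; rewrite -uv uC.
Qed.

Lemma kcliques_in_grow :
  kcliques_in W = kcliques_in V :|: [set swapC u | u in C].
Proof.
apply/setP => X; rewrite in_setU; apply/idP/orP => [|[XV|/imsetP [u uC ->]]].
- rewrite inE => /andP [Xk XW]; case vX: (v \in X); last first.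
    left; rewrite inE Xk; apply/subsetP => x xX.
    by case/setU1P: (subsetP XW x xX) => // xv; rewrite -xv xX in vX.
  right; case/andP: (Xk) => /eqP cardX Xcl.
  have XvC := clique_through_v XW vX Xcl.
  have cardXv : #|X :\ v| = k.-1 by move: cardX; rewrite (cardsD1 v) vX; lia.
  have [u] : exists u, u \in C :\: (X :\ v).
    by apply/card_gt0P; rewrite cardsD card_C (setIidPr XvC) cardXv; lia.
  rewrite inE => /andP [uXv uC]; apply/imsetP; exists u => //.
  suff XvCu : X :\ v = C :\ u by rewrite /swapC -XvCu setD1K.
  have cardCu : #|C :\ u| = k.-1 by move: (cardsD1 u C); rewrite uC card_C; lia.
  apply/eqP; rewrite eqEcard cardXv cardCu leqnn andbT.
  apply/subsetP => x xXv; rewrite !inE (subsetP XvC x xXv) andbT.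
  by apply: contraNneq uXv => <-.
- exact: subsetP (kcliques_inS (subsetU1 _ _)) X XV.
- by rewrite inE kclique_swapC // (subset_trans (swapC_sub u)) // setUS.
Qed.

Lemma retract_swapC u : retract (swapC u) = C.
Proof. by rewrite /retract v_in_swapC. Qed.

Lemma retract_old X : X \in kcliques_in V -> retract X = X.
Proof. by move/notin_kcliques_in_V/negbTE; rewrite /retract => ->. Qed.

Lemma walk_within_setU1C w : walk_within V w -> walk_within W ((v |: C, C) :: w).
Proof.
by move=> wV; apply/andP; split; [apply: setUS | apply: walk_withinS wV; apply: subsetU1].
Qed.

Lemma kdist_within_swapC_old u tau d : u \in C -> tau \in kcliques_in V ->
  kdist_within V C tau d -> kdist_within W (swapC u) tau d.+1.
Proof.
move=> uC tauV [[w /andP [/andP [_ wP] wV] <-] min]; split.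
  exists ((v |: C, C) :: w) => //.
  rewrite /is_kwalk /= kclique_swapC // kclique_setU1C swapC_sub Ck subsetU1 wP.
  exact: walk_within_setU1C.
move=> w' /andP [swapk w'P] w'W.
have swap_tau : swapC u != tau.
  by apply: contraTneq (notin_kcliques_in_V tauV) => <-; rewrite v_in_swapC.
have := retract_walk_lt swapk w'P w'W swap_tau.
rewrite v_in_swapC retract_swapC retract_old // => /(_ isT) [w'' /andP [w''P w''V]].
exact: leq_ltn_trans (min _ w''P w''V).
Qed.

Lemma kdist_within_old_swapC u tau d : u \in C -> tau \in kcliques_in V ->
  kdist_within V tau C d -> kdist_within W tau (swapC u) d.+1.
Proof.
move=> uC tauV [[w /andP [/andP [tauk wP] wV] <-] min]; split.
  exists (w ++ [:: (v |: C, swapC u)]); last by rewrite size_cat addn1.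
  rewrite /is_kwalk tauk (kwalk_from_cat wP) /=; last first.
    by rewrite kclique_setU1C subsetU1 kclique_swapC // swapC_sub eqxx.
  rewrite /walk_within all_cat /= setUS // !andbT.
  exact: walk_withinS (subsetU1 v V) wV.
move=> w' /andP [_ w'P] w'W.
have tau_swap : tau != swapC u.
  by apply: contraTneq (notin_kcliques_in_V tauV) => ->; rewrite v_in_swapC.
have := retract_walk_lt tauk w'P w'W tau_swap.
rewrite v_in_swapC orbT retract_swapC retract_old // => /(_ isT) [w'' /andP [w''P w''V]].
exact: leq_ltn_trans (min _ w''P w''V).
Qed.

Lemma kdist_within_swapC u u' : u \in C -> u' \in C -> u != u' ->
  kdist_within W (swapC u) (swapC u') 1.
Proof.
move=> uC u'C uu'; split.
  exists [:: (v |: C, swapC u')] => //.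
  rewrite /is_kwalk /= !kclique_swapC // kclique_setU1C !swapC_sub eqxx /=.
  by rewrite /walk_within /= setUS.
case=> [|st w] //; rewrite /is_kwalk /= => /andP [_ /eqP swap_uu'].
by move: uu'; rewrite (swapC_inj uC u'C swap_uu') eqxx.
Qed.

Lemma perm_enum_kcliques_in_grow :
  perm_eq (enum (kcliques_in W)) (enum (kcliques_in V) ++ map swapC (enum C)).
Proof.
apply: uniq_perm; rewrite ?enum_uniq //.
  rewrite cat_uniq enum_uniq map_inj_in_uniq ?enum_uniq ?andbT /=; last first.
    by move=> u u'; rewrite !mem_enum; apply: swapC_inj.
  apply/hasPn => _ /mapP [u _ ->]; rewrite mem_enum.
  by apply: contraL (v_in_swapC u); apply: notin_kcliques_in_V.
move=> X; rewrite mem_enum kcliques_in_grow mem_cat mem_enum in_setU; congr (_ || _).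
by apply/imsetP/mapP => -[u uC ->]; exists u; rewrite ?mem_enum in uC *.
Qed.

End AddVertex.

Lemma ktree_card V : ktree_on e k V -> k <= #|V|.
Proof.
elim=> [X /andP [/eqP -> _] // | X v C _ IH vX _ _ _].
by rewrite cardsU1 vX (leq_trans IH) ?leq_addl.
Qed.

Lemma kcliques_in_base V : kclique e k V -> kcliques_in V = [set V].
Proof.
move=> Vk; apply/setP => X; rewrite !inE.
apply/andP/eqP => [[/andP [/eqP cardX _] XV] | ->]; last by [].
case/andP: Vk => /eqP cardV _.
by apply/eqP; rewrite eqEcard XV cardX cardV leqnn.
Qed.

Lemma kdist_within_exists V tau tau' : ktree_on e k V ->
  tau \in kcliques_in V -> tau' \in kcliques_in V -> exists d, kdist_within V tau tau' d.
Proof.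
move=> hV; elim: hV tau tau' => [X Xk | X v C _ IH vX CX Ck NvC] tau tau'.
  by rewrite kcliques_in_base // !inE => /eqP -> /eqP ->; exists 0; apply: kdist_within_refl.
have CK : C \in kcliques_in X by rewrite inE Ck CX.
rewrite (kcliques_in_grow vX CX Ck NvC).
move=> /setUP [tauX | /imsetP [u uC ->]] /setUP [tau'X | /imsetP [u' u'C ->]].
- by have [d] := IH _ _ tauX tau'X; exists d; apply: (kdist_within_old (C := C)).
- by have [d] := IH _ _ tauX CK; exists d.+1; apply: kdist_within_old_swapC.
- by have [d] := IH _ _ CK tau'X; exists d.+1; apply: kdist_within_swapC_old.
- have [<-|uu'] := eqVneq u u'; last by exists 1; apply: kdist_within_swapC.
  by exists 0; apply/kdist_within_refl/(kclique_swapC vX).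
Qed.

Lemma kdist_within_restrict V v C (f : {set T} -> {set T} -> nat) :
  ktree_on e k V -> v \notin V -> C \subset V -> kclique e k C ->
  [set u in V | e v u] = C ->
  {in kcliques_in (v |: V) &, forall tau tau', kdist_within (v |: V) tau tau' (f tau tau')} ->
  {in kcliques_in V &, forall tau tau', kdist_within V tau tau' (f tau tau')}.
Proof.
move=> hV vV CV Ck NvC hf tau tau' tauV tau'V.
have [d hd] := kdist_within_exists hV tauV tau'V.
have /subsetP grow := kcliques_inS (subsetU1 v V).
have hdW := kdist_within_old vV Ck NvC tauV tau'V hd.
by rewrite (kdist_within_uniq (hf _ _ (grow _ tauV) (grow _ tau'V)) hdW).
Qed.

Local Open Scope ring_scope.

Section DistanceMatrix.
Variable R : numFieldType.

Lemma kdist_seq_mx_grow V v C (f : {set T} -> {set T} -> nat) (t : R)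
    (c : 'I_#|kcliques_in V|) :
  v \notin V -> C \subset V -> kclique e k C -> [set u in V | e v u] = C ->
  {in kcliques_in V &, forall tau tau', kdist_within V tau tau' (f tau tau')} ->
  {in kcliques_in (v |: V) &, forall tau tau', kdist_within (v |: V) tau tau' (f tau tau')} ->
  nth set0 (enum (kcliques_in V)) c = C ->
  let g X Y := (f X Y)%:R + t in
  seq_mx set0 g (#|kcliques_in V| + k) (enum (kcliques_in V) ++ map (swapC v C) (enum C)) =
  kext_mx k (seq_mx set0 g #|kcliques_in V| (enum (kcliques_in V))) c.
Proof.
move=> vV CV Ck NvC hfV hfW s0c g.
have CK : C \in kcliques_in V by rewrite inE Ck CV.
have /subsetP grow := kcliques_inS (subsetU1 v V).
have swapK u : u \in C -> swapC v C u \in kcliques_in (v |: V).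
  by move=> uC; rewrite (kcliques_in_grow vV CV Ck NvC) in_setU imset_f ?orbT.
have fCC : f C C = 0%N by apply: kdist_within_uniq (hfV _ _ CK CK) (kdist_within_refl _ Ck).
apply: (seq_mx_cat_kext (y := C)); rewrite ?size_map -?cardE ?card_C //.
- rewrite map_inj_in_uniq ?enum_uniq // => u u'; rewrite !mem_enum => uC u'C.
  exact: (swapC_inj vV CV uC u'C).
- move=> X Y /mapP [u uC ->] YV; rewrite mem_enum in uC; rewrite mem_enum in YV.
  rewrite /g (kdist_within_uniq (hfW _ _ (swapK u uC) (grow _ YV))
    (kdist_within_swapC_old vV CV Ck NvC uC YV (hfV _ _ CK YV))).
  by rewrite -natr1 addrAC.
- move=> Y X YV /mapP [u uC ->]; rewrite mem_enum in uC; rewrite mem_enum in YV.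
  rewrite /g (kdist_within_uniq (hfW _ _ (grow _ YV) (swapK u uC))
    (kdist_within_old_swapC vV CV Ck NvC uC YV (hfV _ _ YV CK))).
  by rewrite -natr1 addrAC.
- move=> X X' /mapP [u + ->] /mapP [u' + ->]; rewrite !mem_enum => uC u'C.
  rewrite /g fCC (inj_in_eq (swapC_inj vV CV)) //.
  have [<-|uu'] := eqVneq u u'.
    by rewrite (kdist_within_uniq (hfW _ _ (swapK u uC) (swapK u uC))
      (kdist_within_refl _ (kclique_swapC vV CV Ck NvC uC))) /=; ring.
  by rewrite (kdist_within_uniq (hfW _ _ (swapK u uC) (swapK u' u'C))
      (kdist_within_swapC vV CV Ck NvC uC u'C uu')) /=; ring.
Qed.

Lemma det_kdist_seq_mx V (f : {set T} -> {set T} -> nat) (t : R) :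
  ktree_on e k V ->
  {in kcliques_in V &, forall tau tau', kdist_within V tau tau' (f tau tau')} ->
  \det (seq_mx set0 (fun X Y => (f X Y)%:R + t) #|kcliques_in V| (enum (kcliques_in V))) =
  (-1) ^+ (k * (#|V| - k)) * k.+1%:R ^+ (#|V| - k) * (t + (#|V| - k)%:R * k%:R / k.+1%:R).
Proof.
move=> hV; elim: hV f t => [X Xk | X v C hX IH vX CX Ck NvC] f t hf.
  have XK : X \in kcliques_in X by rewrite kcliques_in_base ?set11.
  have fXX : f X X = 0%N by apply: kdist_within_uniq (hf _ _ XK XK) (kdist_within_refl _ Xk).
  rewrite kcliques_in_base // enum_set1 cards1 det_mx11 mxE /= fXX.
  by case/andP: Xk => /eqP -> _; rewrite subnn muln0 !expr0 !mul0r add0r addr0 !mul1r.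
have hfX := kdist_within_restrict hX vX CX Ck NvC hf.
have CK : C \in kcliques_in X by rewrite inE Ck CX.
have perm_grow := perm_enum_kcliques_in_grow vX CX Ck NvC.
have card_grow : #|kcliques_in (v |: X)| = (#|kcliques_in X| + k)%N.
  by rewrite cardE (perm_size perm_grow) size_cat size_map -!cardE card_C.
rewrite (det_seq_mx_perm _ _ _ _ perm_grow) -?cardE ?card_grow //; last first.
  by rewrite size_cat size_map -!cardE card_C.
have s0c : nth set0 (enum (kcliques_in X)) (enum_rank_in CK C) = C.
  by rewrite -enum_val_nth enum_rankK_in.
rewrite (kdist_seq_mx_grow t vX CX Ck NvC hfX hf s0c) det_kext_mx ?pnatr_eq0 //.
set a : R := k%:R / k.+1%:R.
have -> : seq_mx set0 (fun X Y => (f X Y)%:R + t) #|kcliques_in X| (enum (kcliques_in X))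
    + const_mx a = seq_mx set0 (fun X Y => (f X Y)%:R + (t + a)) _ (enum (kcliques_in X)).
  by apply/matrixP => i j; rewrite !mxE addrA.
by rewrite IH // cardsU1 vX add1n subSn ?ktree_card // mulnS exprD exprS /a; ring.
Qed.

Lemma map_kdist_matrix : map_mx (intr : int -> R) (kdist_matrix e k) =
  seq_mx set0 (fun X Y => (kdist e k X Y)%:R + 0) #|kcliques e k| (enum (kcliques e k)).
Proof.
apply/matrixP => i j; rewrite !mxE !(enum_val_nth set0) addr0.
case: eqP => [->|_]; last by rewrite -pmulrn.
have : nth set0 (enum (kcliques e k)) j \in kcliques_in setT.
  by rewrite kcliques_inT -mem_enum mem_nth -?cardE.
by rewrite inE => /andP [Xk _]; rewrite (kdist_withinT (kdist_within_refl _ Xk)).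
Qed.

End DistanceMatrix.

End KTreeDistances.

Local Open Scope ring_scope.

Theorem mainTheorem3 (k n : nat) (T : finType) (e : rel T)
  (e_sym : symmetric e) (e_irr : irreflexive e)
  (hk : (1 <= k)%N) (hn : (k + 2 <= n)%N) (hcard : #|T| = n)
  (htree : is_ktree e k) :
  \det (kdist_matrix e k) =
    (-1) ^+ (k * (n - k)) * k%:Z * (k.+1)%:Z ^+ (n - k - 1) * (n - k)%:Z.
Proof.
have kdistT : {in kcliques_in e k setT &,
    forall tau tau', kdist_within e k setT tau tau' (kdist e k tau tau')}.
  move=> tau tau' tauT tau'T; have [d hd] := kdist_within_exists e_sym hk htree tauT tau'T.
  by rewrite (kdist_withinT hd).
have := det_kdist_seq_mx e_sym hk (0 : rat) htree kdistT.
rewrite kcliques_inT cardsT hcard add0r => det_rat.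
apply: (@intr_inj rat); rewrite -det_map_mx map_kdist_matrix det_rat.
set m := (n - k - 1)%N; have -> : (n - k = m.+1)%N by lia.
rewrite !rmorphM /= !rmorphXn /= rmorphN1 -!pmulrn exprS.
by field; rewrite addrC natr1 pnatr_eq0.
Qed.
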